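(* Let $M>0$ and let $b:[0,1]\to\mathbb R$ satisfy $|b(a)|\le M$ for all $a$ and $b(0)=1$. Then there exist $f\in C^{1/2}_c[\frac14,\frac12]$ and $u_0\in(0,\frac{1}{80M})$ such that $L_af(u_0)$ does not converge to $L_0f(u_0)$ as $a\to0^+$.
   Context: For $a>0$ and $f\in L^1(\mathbb R)$, $L_af(u)=\frac{1}{\sqrt{2\pi}}\frac{e^{i\pi/4}}{\sqrt{2a}}\int_{\mathbb R}f(t)e^{-i\frac{(b(a)u-t)^2}{4a}}dt$, and $L_0f(u)=f(b(0)u)=f(u)$. $C^{1/2}_c[\frac14,\frac12]$ denotes complex-valued functions supported in $[\frac14,\frac12]$ that are Hölder continuous of exponent $\frac12$, i.e. $|f(t_1)-f(t_2)|\le C|t_1-t_2|^{1/2}$ for all $t_1,t_2$. *)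

From Stdlib Require Import Reals.
From Coquelicot Require Import Coquelicot.
Open Scope R_scope.

Definition cexpi (x : R) : C := (cos x, sin x).

(* L_a f(u) for a > 0: integral over R as Coquelicot's generalized
   (improper) Riemann integral from -oo to +oo of a complex-valued function *)
Definition Lop (b : R -> R) (a : R) (f : R -> C) (u : R) : C :=
  Cmult (RtoC (/ sqrt (2 * PI)))
    (Cmult (Cmult (cexpi (PI / 4)) (RtoC (/ sqrt (2 * a))))
      (@RInt_gen C_R_CompleteNormedModule (fun t : R => Cmult (f t) (cexpi (- ((b a * u - t) ^ 2 / (4 * a)))))
         (Rbar_locally m_infty) (Rbar_locally p_infty))).

Definition L0 (b : R -> R) (f : R -> C) (u : R) : C := f (b 0 * u).

Definition Holder_half_supp (f : R -> C) : Prop :=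
  (forall t, (t < 1/4 \/ 1/2 < t) -> f t = RtoC 0) /\
  exists K : R, forall t1 t2, Cmod (Cminus (f t1) (f t2)) <= K * sqrt (Rabs (t1 - t2)).

From Stdlib Require Import Reals.
From Coquelicot Require Import Coquelicot.
From Stdlib Require Import Lra Lia Psatz.
Open Scope R_scope.

(* Take f(t) = sum_k s_k h(t) exp (i (b(a_k) u0 - t)^2 / (4 a_k)), a lacunary sum of chirps with
   amplitudes s_k = 4^-(k+3), parameters a_k = s_k^2 and a bump h supported in [1/4, 1/2].
   The k-th chirp moves f by at most min (s_k, |t1 - t2| / s_k) between t1 and t2; summing these
   gives the Hoelder-1/2 bound. At a = a_J the kernel of L_a cancels the phase of the J-th chirp,
   which then contributes s_J * int h; by nonstationary phase each earlier chirp contributes only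
   O(s_k a_J), and the later ones together less than half of s_J * int h. Hence
   |L_{a_J} f(u0)| >= c s_J / sqrt a_J = c > 0 for all J, while L_0 f(u0) = f(u0) = 0 as u0 < 1/4. *)

Lemma Rabs_sin_le x : Rabs (sin x) <= Rabs x.
Proof.
  destruct (Rle_lt_dec 1 (Rabs x)) as [Hx|Hx].
  { apply Rle_trans with 1; [apply Rabs_le, SIN_bound | exact Hx]. }
  assert (HPI : 3 < PI) by (pose proof PI2_3_2; lra).
  destruct (Rtotal_order x 0) as [Hneg|[->|Hpos]].
  - rewrite Rabs_left in Hx by lra.
    assert (sin (- x) < - x) by (apply sin_lt_x; lra).
    assert (0 < sin (- x)) by (apply sin_gt_0; lra).
    rewrite sin_neg in *. rewrite !Rabs_left; lra.
  - rewrite sin_0. lra.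
  - rewrite Rabs_pos_eq in Hx by lra.
    assert (sin x < x) by (apply sin_lt_x; lra).
    assert (0 < sin x) by (apply sin_gt_0; lra).
    rewrite !Rabs_pos_eq; lra.
Qed.

Lemma Rabs_cos_le_1 x : Rabs (cos x) <= 1.
Proof. apply Rabs_le, COS_bound. Qed.

Lemma Rabs_sin_le_1 x : Rabs (sin x) <= 1.
Proof. apply Rabs_le, SIN_bound. Qed.

Lemma Rabs_half x : Rabs (x / 2) = Rabs x / 2.
Proof. unfold Rdiv. rewrite Rabs_mult, (Rabs_pos_eq (/ 2)); lra. Qed.

Lemma cos_lipschitz x y : Rabs (cos x - cos y) <= Rabs (x - y).
Proof.
  rewrite form2, !Rabs_mult, (Rabs_left (-2)) by lra.
  pose proof (Rabs_sin_le ((x - y) / 2)) as Hsin. rewrite Rabs_half in Hsin.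
  pose proof (Rabs_sin_le_1 ((x + y) / 2)).
  pose proof (Rabs_pos (sin ((x - y) / 2))). pose proof (Rabs_pos (sin ((x + y) / 2))).
  nra.
Qed.

Lemma sin_lipschitz x y : Rabs (sin x - sin y) <= Rabs (x - y).
Proof.
  rewrite form4, !Rabs_mult, (Rabs_pos_eq 2) by lra.
  pose proof (Rabs_sin_le ((x - y) / 2)) as Hsin. rewrite Rabs_half in Hsin.
  pose proof (Rabs_cos_le_1 ((x + y) / 2)).
  pose proof (Rabs_pos (sin ((x - y) / 2))). pose proof (Rabs_pos (cos ((x + y) / 2))).
  nra.
Qed.

Definition bump_poly (t : R) : R := (t - 1/4) * (1/2 - t).

Definition clamp (t : R) : R := Rmax (1/4) (Rmin (1/2) t).

(* Supported in [1/4, 1/2] because bump_poly vanishes at both endpoints. *)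
Definition bump (t : R) : R := bump_poly (clamp t).

Lemma bump_poly_bounds t : 1/4 <= t <= 1/2 -> 0 <= bump_poly t <= 1/64.
Proof. intros Ht. unfold bump_poly. pose proof (pow2_ge_0 (t - 3/8)). nra. Qed.

Lemma bump_poly_lipschitz t1 t2 : 1/4 <= t1 <= 1/2 -> 1/4 <= t2 <= 1/2 ->
  Rabs (bump_poly t1 - bump_poly t2) <= Rabs (t1 - t2) / 4.
Proof.
  intros H1 H2. unfold bump_poly.
  replace ((t1 - 1/4) * (1/2 - t1) - (t2 - 1/4) * (1/2 - t2))
    with ((t1 - t2) * (3/4 - t1 - t2)) by field.
  rewrite Rabs_mult. assert (Rabs (3/4 - t1 - t2) <= 1/4) by (apply Rabs_le; lra).
  pose proof (Rabs_pos (t1 - t2)). nra.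
Qed.

Lemma clamp_bounds t : 1/4 <= clamp t <= 1/2.
Proof. unfold clamp, Rmax, Rmin. repeat destruct Rle_dec; lra. Qed.

Lemma clamp_lipschitz t1 t2 : Rabs (clamp t1 - clamp t2) <= Rabs (t1 - t2).
Proof.
  unfold clamp, Rmax, Rmin, Rabs. repeat destruct Rle_dec; repeat destruct Rcase_abs; lra.
Qed.

Lemma bump_bounds t : 0 <= bump t <= 1/64.
Proof. apply bump_poly_bounds, clamp_bounds. Qed.

Lemma bump_in t : 1/4 <= t <= 1/2 -> bump t = bump_poly t.
Proof. intros Ht. unfold bump. f_equal. unfold clamp, Rmax, Rmin. repeat destruct Rle_dec; lra. Qed.

Lemma bump_out t : t <= 1/4 \/ 1/2 <= t -> bump t = 0.
Proof.
  intros Ht. unfold bump, clamp, bump_poly, Rmax, Rmin.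
  destruct Ht as [Ht|Ht]; repeat destruct Rle_dec; try lra.
  replace t with (1/4) by lra. field.
Qed.

Lemma bump_lipschitz t1 t2 : Rabs (bump t1 - bump t2) <= Rabs (t1 - t2) / 4.
Proof.
  eapply Rle_trans; [apply bump_poly_lipschitz; apply clamp_bounds|].
  pose proof (clamp_lipschitz t1 t2). lra.
Qed.

Lemma RInt_bump_poly : RInt bump_poly (1/4) (1/2) = 1/384.
Proof.
  set (F t := - t ^ 3 / 3 + 3/8 * t ^ 2 - t / 8).
  apply is_RInt_unique.
  replace (1/384) with (minus (F (1/2)) (F (1/4)))
    by (unfold F, minus, plus, opp; simpl; field).
  apply (@is_RInt_derive R_CompleteNormedModule).
  - intros t _. unfold F, bump_poly. auto_derive; auto. field.
  - intros t _. apply (@ex_derive_continuous R_AbsRing R_NormedModule).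
    unfold bump_poly. auto_derive; auto.
Qed.

Definition amp (k : nat) : R := / 4 ^ (k + 3).

(* The value of the parameter a at which the k-th chirp of the construction is demodulated. *)
Definition apar (k : nat) : R := amp k * amp k.

Lemma pow_inv4_bounds n : 0 <= (/ 4) ^ n <= 1.
Proof. induction n; simpl; lra. Qed.

Lemma amp_pos k : 0 < amp k.
Proof. apply Rinv_0_lt_compat, pow_lt; lra. Qed.

Lemma amp_S k : amp (S k) = amp k / 4.
Proof.
  unfold amp. replace (S k + 3)%nat with (S (k + 3)) by lia. simpl.
  assert (0 < 4 ^ (k + 3)) by (apply pow_lt; lra). field. lra.
Qed.

Lemma amp_add m k : amp (m + k) = amp m * (/ 4) ^ k.
Proof.
  induction k as [|k IH].
  - rewrite Nat.add_0_r. simpl. ring.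
  - rewrite <- plus_n_Sm, amp_S, IH. simpl. field.
Qed.

Lemma amp_0 : amp 0 = 1/64.
Proof. unfold amp. simpl. field. Qed.

Lemma amp_le k : amp k <= 1/64.
Proof.
  change (amp k) with (amp (0 + k)). rewrite amp_add, amp_0.
  pose proof (pow_inv4_bounds k). lra.
Qed.

Lemma amp_le_pow k : amp k <= (/ 4) ^ k.
Proof.
  change (amp k) with (amp (0 + k)). rewrite amp_add, amp_0.
  pose proof (pow_inv4_bounds k). lra.
Qed.

Lemma amp_lt_le k j : (k < j)%nat -> amp j <= amp k / 4.
Proof.
  intros Hkj. replace j with (S k + (j - S k))%nat by lia. rewrite amp_add, amp_S.
  pose proof (amp_pos k). pose proof (pow_inv4_bounds (j - S k)). nra.
Qed.

Lemma sum_amp n : sum_f_R0 amp n = 1/48 - 4/3 * amp (S n).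
Proof.
  induction n as [|n IH]; simpl.
  - rewrite amp_S, amp_0. field.
  - rewrite IH, (amp_S (S n)). field.
Qed.

Lemma is_series_amp_tail m c : is_series (fun k => amp (m + k) * c) (amp m * (4/3) * c).
Proof.
  apply is_series_scal_r.
  apply is_series_ext with (fun k => (/ 4) ^ k * amp m).
  { intros k. rewrite amp_add. apply Rmult_comm. }
  replace (amp m * (4/3)) with (/ (1 - / 4) * amp m) by field.
  apply is_series_scal_r, is_series_geom. rewrite Rabs_pos_eq; lra.
Qed.

Lemma ex_series_abs_tail_amp (D : nat -> R) c m :
  (forall k, Rabs (D k) <= amp k * c) -> ex_series (fun k => Rabs (D (m + k)%nat)).
Proof.
  intros HD. apply (@ex_series_le R_AbsRing R_CompleteNormedModule _ (fun k => amp (m + k) * c)).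
  - intros k. change (Rabs (Rabs (D (m + k)%nat)) <= amp (m + k) * c).
    rewrite Rabs_Rabsolu. apply HD.
  - eexists. apply is_series_amp_tail.
Qed.

Lemma Series_abs_tail_amp_le (D : nat -> R) c m :
  (forall k, Rabs (D k) <= amp k * c) -> Series (fun k => Rabs (D (m + k)%nat)) <= amp m * (4/3) * c.
Proof.
  intros HD. rewrite <- (is_series_unique _ _ (is_series_amp_tail m c)).
  apply Series_le; [|eexists; apply is_series_amp_tail].
  intros k. split; [apply Rabs_pos | apply HD].
Qed.

Lemma sum_le_inv_amp (D : nat -> R) d n :
  0 <= d -> (forall k, D k <= d / amp k) -> sum_f_R0 D n <= d / (3 * amp (S n)).
Proof.
  intros Hd HD.
  assert (Hinv : forall k, d / amp k = d * 4 ^ (k + 3))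
    by (intros k; unfold amp, Rdiv; now rewrite Rinv_inv).
  replace (d / (3 * amp (S n))) with (d / amp (S n) / 3)
    by (pose proof (amp_pos (S n)); field; lra).
  rewrite Hinv. replace (S n + 3)%nat with (n + 4)%nat by lia.
  induction n as [|n IH]; simpl.
  - specialize (HD 0%nat). rewrite Hinv in HD. simpl in *. lra.
  - specialize (HD (S n)). rewrite Hinv in HD.
    replace (S n + 3)%nat with (n + 4)%nat in HD by lia.
    replace (S n + 4)%nat with (S (n + 4)) by lia. simpl.
    assert (0 <= d * 4 ^ (n + 4)) by (apply Rmult_le_pos; [lra | apply pow_le; lra]).
    lra.
Qed.

Lemma apar_pos k : 0 < apar k.
Proof. pose proof (amp_pos k). unfold apar. nra. Qed.

Lemma apar_le_amp k : apar k <= amp k / 64.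
Proof. pose proof (amp_pos k). pose proof (amp_le k). unfold apar. nra. Qed.

Lemma apar_lt_le k j : (k < j)%nat -> 16 * apar j <= apar k.
Proof. intros Hkj. pose proof (amp_lt_le k j Hkj). pose proof (amp_pos j). unfold apar. nra. Qed.

Lemma sqrt_apar k : sqrt (apar k) = amp k.
Proof. apply sqrt_square, Rlt_le, amp_pos. Qed.

Lemma apar_small d : 0 < d -> exists n, apar n < d.
Proof.
  intros Hd. destruct (pow_lt_1_zero (/ 4) ltac:(rewrite Rabs_pos_eq; lra) d Hd) as [n Hn].
  exists n. specialize (Hn n (le_n n)). rewrite Rabs_pos_eq in Hn by (apply pow_le; lra).
  pose proof (apar_le_amp n). pose proof (amp_le_pow n). pose proof (amp_pos n). lra.
Qed.

Lemma apar_bracket d : 0 < d -> d < apar 0 -> exists n, apar (S n) < d <= apar n.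
Proof.
  intros Hd Hd0. destruct (apar_small d Hd) as [n Hn].
  induction n as [|n IH]; [lra|].
  destruct (Rlt_le_dec (apar n) d) as [Hlt|Hle]; [now apply IH | now exists n].
Qed.

Section Nonstationary_phase.
Variables xk xj ak aj : R.
Hypothesis aj_pos : 0 < aj.
Hypothesis ak_large : 16 * aj <= ak.
Hypothesis xk_small : Rabs xk <= 1/160.
Hypothesis xj_small : Rabs xj <= 1/160.

Definition theta (t : R) : R := (xk - t) ^ 2 / (4 * ak) - (xj - t) ^ 2 / (4 * aj).
Definition theta' (t : R) : R := (t - xk) / (2 * ak) - (t - xj) / (2 * aj).
Definition theta'' : R := / (2 * ak) - / (2 * aj).
Definition quot (t : R) : R := bump_poly t / theta' t.
Definition quot' (t : R) : R :=
  ((3/4 - 2 * t) * theta' t - bump_poly t * theta'') / theta' t ^ 2.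

(* Because ak >= 16 aj, the phase of the j-th chirp dominates: no stationary point on [1/4, 1/2]. *)
Lemma theta'_le t : 1/4 <= t <= 1/2 -> theta' t <= - / (10 * aj).
Proof.
  intros Ht. unfold theta'.
  apply Rabs_le_between in xk_small. apply Rabs_le_between in xj_small.
  set (ij := / aj). set (ik := / ak).
  assert (Hij : 0 < ij) by (apply Rinv_0_lt_compat; lra).
  assert (Hik : 0 < ik) by (apply Rinv_0_lt_compat; lra).
  assert (ik <= ij / 16).
  { unfold ik, ij. replace (/ aj / 16) with (/ (16 * aj)) by (field; lra).
    apply Rinv_le_contravar; lra. }
  replace ((t - xk) / (2 * ak) - (t - xj) / (2 * aj)) with ((t - xk) * ik / 2 - (t - xj) * ij / 2)
    by (unfold ik, ij; field; lra).
  replace (- / (10 * aj)) with (- ij / 10) by (unfold ij; field; lra).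
  assert ((t - xk) * ik <= 81/160 * ik) by (apply Rmult_le_compat_r; lra).
  assert (39/160 * ij <= (t - xj) * ij) by (apply Rmult_le_compat_r; lra).
  lra.
Qed.

Lemma theta'_neq0 t : 1/4 <= t <= 1/2 -> theta' t <> 0.
Proof.
  intros Ht. pose proof (theta'_le t Ht).
  assert (0 < / (10 * aj)) by (apply Rinv_0_lt_compat; lra). lra.
Qed.

Lemma quot'_bound t : 1/4 <= t <= 1/2 -> Rabs (quot' t) <= 4 * aj.
Proof.
  intros Ht. pose proof (theta'_le t Ht) as Hth. pose proof (theta'_neq0 t Ht).
  set (e := / theta' t).
  assert (He : - (10 * aj) <= e < 0).
  { assert (theta' t < 0) by (pose proof (Rinv_0_lt_compat (10 * aj)); lra).
    unfold e. split; [|now apply Rinv_lt_0_compat].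
    replace (/ theta' t) with (- / (- theta' t)) by (field; lra).
    apply Ropp_le_contravar. rewrite <- (Rinv_inv (10 * aj)).
    apply Rinv_le_contravar; [apply Rinv_0_lt_compat|]; lra. }
  assert (Eq : quot' t = (3/4 - 2 * t) * e - bump_poly t * theta'' * (e * e))
    by (unfold quot', e; field; lra).
  assert (H2 : - / (2 * aj) <= theta'' <= 0).
  { unfold theta''. assert (0 < / (2 * ak)) by (apply Rinv_0_lt_compat; lra).
    assert (/ (2 * ak) <= / (2 * aj)) by (apply Rinv_le_contravar; lra). lra. }
  pose proof (bump_poly_bounds t Ht) as Hb.
  assert (T1 : Rabs ((3/4 - 2 * t) * e) <= 1/4 * (10 * aj)).
  { rewrite Rabs_mult, (Rabs_left e) by lra.
    assert (Rabs (3/4 - 2 * t) <= 1/4) by (apply Rabs_le; lra).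
    apply Rmult_le_compat; try lra; apply Rabs_pos. }
  assert (T2 : Rabs (bump_poly t * theta'' * (e * e)) <= 1/64 * / (2 * aj) * (10 * aj * (10 * aj))).
  { rewrite !Rabs_mult, (Rabs_pos_eq (bump_poly t)), (Rabs_left1 theta''), Rabs_left by lra.
    apply Rmult_le_compat; nra. }
  replace (1/64 * / (2 * aj) * (10 * aj * (10 * aj))) with (100/128 * aj) in T2 by (field; lra).
  rewrite Eq. eapply Rle_trans; [apply Rabs_triang|]. rewrite Rabs_Ropp. lra.
Qed.

Lemma is_derive_quot_sin_theta t : 1/4 <= t <= 1/2 ->
  is_derive (fun t => quot t * sin (theta t)) t
    (quot' t * sin (theta t) + bump_poly t * cos (theta t)).
Proof.
  intros Ht. pose proof (theta'_neq0 t Ht) as Hth.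
  unfold quot, quot', theta'', theta, bump_poly. unfold theta' in *.
  auto_derive; [exact Hth|].
  replace ((t + - xk) * / (2 * ak) + - ((t + - xj) * / (2 * aj)))
    with ((t - xk) / (2 * ak) - (t - xj) / (2 * aj)) by (field; lra).
  replace ((xk + - t) * ((xk + - t) * 1) * / (4 * ak) + - ((xj + - t) * ((xj + - t) * 1) * / (4 * aj)))
    with ((xk - t) ^ 2 / (4 * ak) - (xj - t) ^ 2 / (4 * aj)) by (field; lra).
  replace (- (1) * ((1 + 1) * ((xk + - t) * 1)) * / (4 * ak)
           + - (- (1) * ((1 + 1) * ((xj + - t) * 1)) * / (4 * aj)))
    with ((t - xk) / (2 * ak) - (t - xj) / (2 * aj)) by (field; lra).
  set (D := (t - xk) / (2 * ak) - (t - xj) / (2 * aj)) in *.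
  field. repeat split; lra || exact Hth.
Qed.

Lemma continuous_quot'_sin_theta t : 1/4 <= t <= 1/2 ->
  continuous (fun t => quot' t * sin (theta t)) t.
Proof.
  intros Ht. pose proof (theta'_neq0 t Ht) as Hth.
  apply (@ex_derive_continuous R_AbsRing R_NormedModule).
  unfold quot', theta'', theta, bump_poly. unfold theta' in *.
  auto_derive.
  replace ((t + - xk) * / (2 * ak) + - ((t + - xj) * / (2 * aj)))
    with ((t - xk) / (2 * ak) - (t - xj) / (2 * aj)) by (field; lra).
  rewrite Rmult_1_r. now apply Rmult_integral_contrapositive_currified.
Qed.

Lemma continuous_bump_poly_cos_theta t : continuous (fun t => bump_poly t * cos (theta t)) t.
Proof.
  apply (@ex_derive_continuous R_AbsRing R_NormedModule).
  unfold theta, bump_poly. auto_derive. split; lra.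
Qed.

(* Integrate by parts against the derivative of sin (theta t); the boundary terms vanish
   with bump_poly. *)
Lemma RInt_bump_poly_cos_theta_le :
  Rabs (RInt (fun t => bump_poly t * cos (theta t)) (1/4) (1/2)) <= aj.
Proof.
  set (F t := quot t * sin (theta t)).
  assert (IF : is_RInt (fun t => quot' t * sin (theta t) + bump_poly t * cos (theta t))
                 (1/4) (1/2) (minus (F (1/2)) (F (1/4)))).
  { apply (@is_RInt_derive R_CompleteNormedModule); intros t Ht;
      rewrite Rmin_left, Rmax_right in Ht by lra.
    - now apply is_derive_quot_sin_theta.
    - apply (continuous_plus (fun t => quot' t * sin (theta t))).
      + now apply continuous_quot'_sin_theta.
      + apply continuous_bump_poly_cos_theta. }
  replace (minus (F (1/2)) (F (1/4))) with 0 in IF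
    by (unfold F, quot, bump_poly, minus, plus, opp; simpl; unfold Rdiv; ring).
  assert (Ex : ex_RInt (fun t => quot' t * sin (theta t)) (1/4) (1/2)).
  { apply (@ex_RInt_continuous R_CompleteNormedModule). intros t Ht.
    rewrite Rmin_left, Rmax_right in Ht by lra. now apply continuous_quot'_sin_theta. }
  assert (IC : is_RInt (fun t => bump_poly t * cos (theta t)) (1/4) (1/2)
                 (minus 0 (RInt (fun t => quot' t * sin (theta t)) (1/4) (1/2)))).
  { eapply is_RInt_ext; [|exact (is_RInt_minus _ _ _ _ _ _ IF (RInt_correct _ _ _ Ex))].
    intros t _. unfold minus, plus, opp; simpl. ring. }
  rewrite (is_RInt_unique _ _ _ _ IC).
  unfold minus, plus, opp; simpl. rewrite Rplus_0_l, Rabs_Ropp.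
  replace aj with ((1/2 - 1/4) * (4 * aj)) by field.
  apply abs_RInt_le_const; [lra|exact Ex|].
  intros t Ht. rewrite Rabs_mult.
  pose proof (quot'_bound t Ht). pose proof (Rabs_pos (quot' t)).
  pose proof (Rabs_sin_le_1 (theta t)). pose proof (Rabs_pos (sin (theta t))). nra.
Qed.

End Nonstationary_phase.

(* Split the sum at the index where amp k crosses sqrt d. *)
Lemma Series_abs_le_sqrt (D : nat -> R) d : 0 <= d ->
  (forall k, Rabs (D k) <= amp k / 32) -> (forall k, Rabs (D k) <= d / amp k) ->
  Series (fun k => Rabs (D k)) <= sqrt d.
Proof.
  intros Hd Hbig Hsmall.
  assert (Hbig' : forall k, Rabs (D k) <= amp k * (1/32)) by (intros k; specialize (Hbig k); lra).
  assert (Htail : forall m, Series (fun k => Rabs (D (m + k)%nat)) <= amp m / 24).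
  { intros m. pose proof (Series_abs_tail_amp_le D (1/32) m Hbig'). lra. }
  assert (Hsum : ex_series (fun k => Rabs (D k))) by exact (ex_series_abs_tail_amp D _ 0 Hbig').
  pose proof (Htail 0%nat) as Htail0. simpl in Htail0.
  pose proof (sqrt_pos d).
  destruct (Req_dec d 0) as [->|Hd0].
  { rewrite (Series_ext _ (fun k => 0 * amp k)), Series_scal_l; [lra|].
    intros k. specialize (Hsmall k). unfold Rdiv in Hsmall. rewrite Rmult_0_l in Hsmall.
    pose proof (Rabs_pos (D k)). lra. }
  destruct (Rlt_le_dec d (apar 0)) as [Hsm|Hlarge].
  2: { assert (amp 0 <= sqrt d)
         by (rewrite <- sqrt_apar; apply sqrt_le_1; [apply Rlt_le, apar_pos | lra | exact Hlarge]).
       lra. }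
  destruct (apar_bracket d) as [m [Hm1 Hm2]]; [lra|lra|].
  assert (Hsq1 : amp (S m) < sqrt d).
  { rewrite <- sqrt_apar. apply sqrt_lt_1; [apply Rlt_le, apar_pos | lra | exact Hm1]. }
  assert (Hsq2 : sqrt d <= amp m).
  { rewrite <- sqrt_apar. apply sqrt_le_1; [lra | apply Rlt_le, apar_pos | exact Hm2]. }
  rewrite amp_S in Hsq1.
  destruct m as [|m]; [lra|].
  rewrite (Series_incr_n _ (S m)) by (lia || exact Hsum). simpl Init.Nat.pred.
  pose proof (Htail (S m)) as HtailS.
  pose proof (sum_le_inv_amp (fun k => Rabs (D k)) d m Hd Hsmall) as Hhead.
  assert (d / amp (S m) <= sqrt d).
  { pose proof (amp_pos (S m)). apply Rmult_le_reg_r with (amp (S m)); [lra|].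
    unfold Rdiv. rewrite Rmult_assoc, Rinv_l, Rmult_1_r by lra.
    rewrite <- (sqrt_sqrt d) at 1 by lra. apply Rmult_le_compat_l; lra. }
  assert (d / (3 * amp (S m)) = d / amp (S m) / 3) by (pose proof (amp_pos (S m)); field; lra).
  lra.
Qed.

Lemma RInt_sum_f_R0 (U : nat -> R -> R) a b n : (forall k, ex_RInt (U k) a b) ->
  ex_RInt (fun t => sum_f_R0 (fun k => U k t) n) a b /\
  RInt (fun t => sum_f_R0 (fun k => U k t) n) a b = sum_f_R0 (fun k => RInt (U k) a b) n.
Proof.
  intros HU. induction n as [|n [IHex IHeq]]; simpl; [split; auto|].
  split.
  - apply (@ex_RInt_plus R_NormedModule); auto.
  - rewrite <- IHeq. apply (@RInt_plus R_CompleteNormedModule); auto.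
Qed.

Lemma continuous_of_holder_half (F : R -> R) :
  (forall t1 t2, Rabs (F t1 - F t2) <= sqrt (Rabs (t1 - t2))) -> forall t, continuous F t.
Proof.
  intros HF t. apply (proj2 (@filterlim_locally R_UniformSpace R_UniformSpace _ _ _ _)).
  intros eps. assert (He : 0 < eps * eps) by (pose proof (cond_pos eps); nra).
  exists (mkposreal _ He). intros y Hy. change (Rabs (y - t) < eps * eps) in Hy.
  change (Rabs (F y - F t) < eps).
  eapply Rle_lt_trans; [apply HF|].
  rewrite <- (sqrt_square eps) by apply Rlt_le, cond_pos.
  apply sqrt_lt_1; [apply Rabs_pos | nra | exact Hy].
Qed.

Lemma Cmod_cexpi x : Cmod (cexpi x) = 1.
Proof.
  unfold Cmod, cexpi. cbn [fst snd].
  replace (cos x ^ 2 + sin x ^ 2) with 1 by (rewrite <- (sin2_cos2 x); unfold Rsqr; ring).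
  apply sqrt_1.
Qed.

Lemma is_RInt_zero (F : R -> C) a b : a <= b -> (forall t, a < t < b -> F t = RtoC 0) ->
  @is_RInt C_R_NormedModule F a b (RtoC 0).
Proof.
  intros Hab HF. apply (@is_RInt_ext C_R_NormedModule (fun _ => RtoC 0)).
  - intros t Ht. rewrite Rmin_left, Rmax_right in Ht by lra. symmetry. now apply HF.
  - pose proof (@is_RInt_const C_R_NormedModule a b (RtoC 0)) as H0.
    now rewrite (@scal_zero_r R_Ring (NormedModule.ModuleSpace R_AbsRing C_R_NormedModule)) in H0.
Qed.

Lemma is_RInt_gen_of_support (F : R -> C) a b l : a <= b ->
  (forall t, t <= a \/ b <= t -> F t = RtoC 0) -> @is_RInt C_R_NormedModule F a b l ->
  @is_RInt_gen C_R_NormedModule F (Rbar_locally m_infty) (Rbar_locally p_infty) l.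
Proof.
  intros Hab HF Hl P HP.
  apply Filter_prod with (fun x => x < a) (fun y => b < y); [now exists a | now exists b|].
  intros x y Hx Hy. exists l. split; [|now apply locally_singleton].
  replace l with (@plus C_R_NormedModule (@plus C_R_NormedModule zero l) zero)
    by now rewrite plus_zero_r, plus_zero_l.
  apply (@is_RInt_Chasles C_R_NormedModule) with b;
    [apply (@is_RInt_Chasles C_R_NormedModule) with a; [|exact Hl] |].
  all: apply is_RInt_zero; simpl; [lra | intros t Ht; apply HF; lra].
Qed.

Section Chirp.
Variable X : nat -> R.
Hypothesis X_small : forall k, Rabs (X k) <= 1/160.

Definition chirp_phase (k : nat) (t : R) : R := (X k - t) ^ 2 / (4 * apar k).

Lemma chirp_phase_lipschitz k t1 t2 : 1/4 <= t1 <= 1/2 -> 1/4 <= t2 <= 1/2 ->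
  Rabs (chirp_phase k t1 - chirp_phase k t2) <= Rabs (t1 - t2) / (2 * apar k).
Proof.
  intros H1 H2. pose proof (apar_pos k). unfold chirp_phase.
  replace ((X k - t1) ^ 2 / (4 * apar k) - (X k - t2) ^ 2 / (4 * apar k))
    with ((t1 - t2) * (t1 + t2 - 2 * X k) / (4 * apar k)) by (field; lra).
  unfold Rdiv. rewrite !Rabs_mult, (Rabs_pos_eq (/ (4 * apar k)))
    by (apply Rlt_le, Rinv_0_lt_compat; lra).
  replace (/ (2 * apar k)) with (2 * / (4 * apar k)) by (field; lra).
  assert (Rabs (t1 + t2 - 2 * X k) <= 2)
    by (pose proof (X_small k) as Hx; apply Rabs_le_between in Hx; apply Rabs_le; lra).
  rewrite <- (Rmult_assoc _ 2).
  apply Rmult_le_compat_r; [apply Rlt_le, Rinv_0_lt_compat; lra|].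
  apply Rmult_le_compat_l; [apply Rabs_pos | assumption].
Qed.

Lemma continuous_chirp_phase k t : continuous (chirp_phase k) t.
Proof.
  apply (@ex_derive_continuous R_AbsRing R_NormedModule). unfold chirp_phase.
  pose proof (apar_pos k). auto_derive. lra.
Qed.

Section Profile.
Variable g : R -> R.
Hypothesis g_bound : forall z, Rabs (g z) <= 1.

Definition chirp_term (k : nat) (t : R) : R := amp k * bump t * g (chirp_phase k t).
Definition chirp_series (t : R) : R := Series (fun k => chirp_term k t).

Lemma chirp_term_bound k t : Rabs (chirp_term k t) <= amp k * (1/64).
Proof.
  unfold chirp_term. rewrite !Rabs_mult, (Rabs_pos_eq (amp k)), (Rabs_pos_eq (bump t))
    by (apply bump_bounds || apply Rlt_le, amp_pos).
  pose proof (bump_bounds t). pose proof (g_bound (chirp_phase k t)).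
  pose proof (Rabs_pos (g (chirp_phase k t))). pose proof (amp_pos k).
  rewrite Rmult_assoc. apply Rmult_le_compat_l; nra.
Qed.

Lemma ex_series_chirp t : ex_series (fun k => chirp_term k t).
Proof.
  apply ex_series_Rabs.
  exact (ex_series_abs_tail_amp (fun k => chirp_term k t) _ 0 (fun k => chirp_term_bound k t)).
Qed.

Lemma chirp_series_out t : t <= 1/4 \/ 1/2 <= t -> chirp_series t = 0.
Proof.
  intros Ht. unfold chirp_series, chirp_term. rewrite bump_out by exact Ht.
  rewrite (Series_ext _ (fun k => 0 * amp k)) by (intros; ring).
  rewrite Series_scal_l. ring.
Qed.

Hypothesis g_lipschitz : forall z w, Rabs (g z - g w) <= Rabs (z - w).

Lemma bump_mul_g_lipschitz k t1 t2 :
  Rabs (bump t1 * g (chirp_phase k t1) - bump t2 * g (chirp_phase k t2))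
  <= Rabs (t1 - t2) * (1/4 + 1 / (128 * apar k)).
Proof.
  pose proof (apar_pos k). pose proof (Rabs_pos (t1 - t2)).
  set (g1 := g (chirp_phase k t1)). set (g2 := g (chirp_phase k t2)).
  pose proof (g_bound (chirp_phase k t1)) as B1. pose proof (g_bound (chirp_phase k t2)) as B2.
  fold g1 in B1. fold g2 in B2.
  pose proof (bump_lipschitz t1 t2) as HL. pose proof (bump_bounds t1). pose proof (bump_bounds t2).
  assert (Hslack : 0 <= Rabs (t1 - t2) * (1 / (128 * apar k))).
  { apply Rmult_le_pos; [lra|]. apply Rlt_le, Rdiv_lt_0_compat; lra. }
  destruct (Rle_dec (1/4) t1) as [L1|L1]; [destruct (Rle_dec t1 (1/2)) as [U1|U1]|].
  2, 3:
    rewrite (bump_out t1) in * by lra;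
    rewrite Rmult_0_l, Rminus_0_l, Rabs_Ropp, Rabs_mult, (Rabs_pos_eq (bump t2)) by lra;
    rewrite Rminus_0_l, Rabs_Ropp, (Rabs_pos_eq (bump t2)) in HL by lra;
    pose proof (Rabs_pos g2); nra.
  destruct (Rle_dec (1/4) t2) as [L2|L2]; [destruct (Rle_dec t2 (1/2)) as [U2|U2]|].
  2, 3:
    rewrite (bump_out t2) in * by lra;
    rewrite Rmult_0_l, Rminus_0_r, Rabs_mult, (Rabs_pos_eq (bump t1)) by lra;
    rewrite Rminus_0_r, (Rabs_pos_eq (bump t1)) in HL by lra;
    pose proof (Rabs_pos g1); nra.
  assert (Hg : Rabs (g1 - g2) <= Rabs (t1 - t2) / (2 * apar k)).
  { eapply Rle_trans; [apply g_lipschitz | apply chirp_phase_lipschitz; lra]. }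
  replace (bump t1 * g1 - bump t2 * g2) with ((bump t1 - bump t2) * g1 + bump t2 * (g1 - g2)) by ring.
  eapply Rle_trans; [apply Rabs_triang|]. rewrite !Rabs_mult, (Rabs_pos_eq (bump t2)) by lra.
  pose proof (Rabs_pos g1). pose proof (Rabs_pos (bump t1 - bump t2)). pose proof (Rabs_pos (g1 - g2)).
  assert (Rabs (bump t1 - bump t2) * Rabs g1 <= Rabs (t1 - t2) / 4) by nra.
  assert (bump t2 * Rabs (g1 - g2) <= 1/64 * (Rabs (t1 - t2) / (2 * apar k))) by nra.
  replace (Rabs (t1 - t2) * (1/4 + 1 / (128 * apar k)))
    with (Rabs (t1 - t2) / 4 + 1/64 * (Rabs (t1 - t2) / (2 * apar k))) by (field; lra).
  lra.
Qed.

Lemma chirp_term_lipschitz k t1 t2 :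
  Rabs (chirp_term k t1 - chirp_term k t2) <= Rabs (t1 - t2) / amp k.
Proof.
  unfold chirp_term. pose proof (amp_pos k). pose proof (amp_le k).
  replace (amp k * bump t1 * g (chirp_phase k t1) - amp k * bump t2 * g (chirp_phase k t2))
    with (amp k * (bump t1 * g (chirp_phase k t1) - bump t2 * g (chirp_phase k t2))) by ring.
  rewrite Rabs_mult, Rabs_pos_eq by lra.
  eapply Rle_trans; [apply Rmult_le_compat_l; [lra | apply bump_mul_g_lipschitz]|].
  unfold apar. pose proof (Rabs_pos (t1 - t2)).
  replace (amp k * (Rabs (t1 - t2) * (1/4 + 1 / (128 * (amp k * amp k)))))
    with (Rabs (t1 - t2) * (amp k * amp k / 4 + 1/128) / amp k) by (field; lra).
  unfold Rdiv. apply Rmult_le_compat_r; [apply Rlt_le, Rinv_0_lt_compat; lra|].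
  rewrite <- (Rmult_1_r (Rabs (t1 - t2))) at 2. apply Rmult_le_compat_l; nra.
Qed.

Lemma chirp_series_holder t1 t2 :
  Rabs (chirp_series t1 - chirp_series t2) <= sqrt (Rabs (t1 - t2)).
Proof.
  set (D k := chirp_term k t1 - chirp_term k t2).
  assert (HD : forall k, Rabs (D k) <= amp k / 32).
  { intros k. unfold D, Rminus. eapply Rle_trans; [apply Rabs_triang|]. rewrite Rabs_Ropp.
    pose proof (chirp_term_bound k t1). pose proof (chirp_term_bound k t2). lra. }
  unfold chirp_series. rewrite <- Series_minus by apply ex_series_chirp.
  eapply Rle_trans.
  - apply Series_Rabs. apply (ex_series_abs_tail_amp D (1/32) 0). intros k. specialize (HD k). lra.
  - apply Series_abs_le_sqrt; [apply Rabs_pos | exact HD | intros k; apply chirp_term_lipschitz].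
Qed.

Lemma continuous_chirp_series t : continuous chirp_series t.
Proof. apply continuous_of_holder_half, chirp_series_holder. Qed.

End Profile.

(* Real part of f(t) exp (- i chirp_phase J t): the J-th chirp loses its oscillation. *)
Definition demod_term (J k : nat) (t : R) : R := chirp_term (fun z => cos (z - chirp_phase J t)) k t.
Definition demod (J : nat) (t : R) : R := Series (fun k => demod_term J k t).

Lemma demod_eq J t :
  demod J t = chirp_series cos t * cos (chirp_phase J t) + chirp_series sin t * sin (chirp_phase J t).
Proof.
  unfold demod, demod_term, chirp_series. rewrite <- !Series_scal_r, <- Series_plus.
  - apply Series_ext. intros k. unfold chirp_term. rewrite cos_minus. ring.
  - apply ex_series_scal_r, ex_series_chirp, Rabs_cos_le_1.
  - apply ex_series_scal_r, ex_series_chirp, Rabs_sin_le_1.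
Qed.

Lemma continuous_demod J t : continuous (demod J) t.
Proof.
  apply (continuous_ext (fun t => plus (mult (chirp_series cos t) (cos (chirp_phase J t)))
                                        (mult (chirp_series sin t) (sin (chirp_phase J t))))).
  { intros u. now rewrite demod_eq. }
  apply (@continuous_plus R_UniformSpace R_AbsRing R_NormedModule);
  apply (@continuous_mult R_UniformSpace R_AbsRing).
  - apply continuous_chirp_series; [apply Rabs_cos_le_1 | apply cos_lipschitz].
  - apply continuous_cos_comp, continuous_chirp_phase.
  - apply continuous_chirp_series; [apply Rabs_sin_le_1 | apply sin_lipschitz].
  - apply continuous_sin_comp, continuous_chirp_phase.
Qed.

Lemma demod_term_in J k t : 1/4 <= t <= 1/2 ->
  demod_term J k t = amp k * (bump_poly t * cos (theta (X k) (X J) (apar k) (apar J) t)).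
Proof.
  intros Ht. unfold demod_term, chirp_term. rewrite bump_in by exact Ht.
  unfold theta, chirp_phase. ring.
Qed.

Lemma RInt_demod_term J k :
  ex_RInt (demod_term J k) (1/4) (1/2) /\
  RInt (demod_term J k) (1/4) (1/2)
  = amp k * RInt (fun t => bump_poly t * cos (theta (X k) (X J) (apar k) (apar J) t)) (1/4) (1/2).
Proof.
  assert (Hcont : forall t,
            continuous (fun t => bump_poly t * cos (theta (X k) (X J) (apar k) (apar J) t)) t).
  { intros t. apply (@ex_derive_continuous R_AbsRing R_NormedModule). unfold theta, bump_poly.
    pose proof (apar_pos k). pose proof (apar_pos J). auto_derive. split; lra. }
  assert (Hex : ex_RInt (fun t => bump_poly t * cos (theta (X k) (X J) (apar k) (apar J) t)) (1/4) (1/2))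
    by (apply (@ex_RInt_continuous R_CompleteNormedModule); intros; apply Hcont).
  assert (Hext : forall t, Rmin (1/4) (1/2) < t < Rmax (1/4) (1/2) ->
            amp k * (bump_poly t * cos (theta (X k) (X J) (apar k) (apar J) t)) = demod_term J k t).
  { intros t Ht. rewrite Rmin_left, Rmax_right in Ht by lra. symmetry. apply demod_term_in. lra. }
  split.
  - eapply (@ex_RInt_ext R_NormedModule); [exact Hext|].
    apply (@ex_RInt_scal R_NormedModule). exact Hex.
  - rewrite <- (@RInt_ext R_CompleteNormedModule _ _ _ _ Hext).
    exact (@RInt_scal R_CompleteNormedModule _ _ _ _ Hex).
Qed.

Lemma RInt_demod_term_diag J : RInt (demod_term J J) (1/4) (1/2) = amp J / 384.
Proof.
  rewrite (proj2 (RInt_demod_term J J)).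
  replace (amp J / 384) with (amp J * RInt bump_poly (1/4) (1/2)) by (rewrite RInt_bump_poly; field).
  f_equal. apply (@RInt_ext R_CompleteNormedModule). intros t _.
  unfold theta. rewrite Rminus_diag, cos_0. apply Rmult_1_r.
Qed.

Lemma RInt_demod_term_cross_le J k : (k < J)%nat ->
  Rabs (RInt (demod_term J k) (1/4) (1/2)) <= amp k * apar J.
Proof.
  intros HkJ. rewrite (proj2 (RInt_demod_term J k)), Rabs_mult, Rabs_pos_eq by apply Rlt_le, amp_pos.
  apply Rmult_le_compat_l; [apply Rlt_le, amp_pos|].
  apply RInt_bump_poly_cos_theta_le; auto using apar_pos, apar_lt_le.
Qed.

Lemma RInt_demod_head_le J :
  ex_RInt (fun t => sum_f_R0 (fun k => demod_term (S J) k t) J) (1/4) (1/2) /\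
  Rabs (RInt (fun t => sum_f_R0 (fun k => demod_term (S J) k t) J) (1/4) (1/2)) <= apar (S J) / 48.
Proof.
  destruct (RInt_sum_f_R0 (demod_term (S J)) (1/4) (1/2) J) as [Hex ->];
    [intros k; apply RInt_demod_term|].
  split; [exact Hex|].
  eapply Rle_trans; [apply sum_f_R0_triangle|].
  apply Rle_trans with (sum_f_R0 (fun k => amp k * apar (S J)) J).
  - apply sum_Rle. intros k Hk. apply RInt_demod_term_cross_le. lia.
  - rewrite <- scal_sum, sum_amp. pose proof (amp_pos (S J)). pose proof (apar_pos (S J)). nra.
Qed.

Lemma demod_tail_le J t : Rabs (Series (fun k => demod_term J (S J + k) t)) <= amp J / 192.
Proof.
  assert (HD : forall k, Rabs (demod_term J k t) <= amp k * (1/64))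
    by (intros k; apply chirp_term_bound; intros z; apply Rabs_cos_le_1).
  eapply Rle_trans; [apply Series_Rabs, (ex_series_abs_tail_amp _ _ _ HD)|].
  eapply Rle_trans; [apply (Series_abs_tail_amp_le _ _ _ HD)|].
  rewrite amp_S. pose proof (amp_pos J). lra.
Qed.

(* The J-th chirp contributes amp J / 384, the earlier ones O(apar J) by nonstationary phase,
   the later ones at most amp J / 768. *)
Lemma RInt_demod_ge J : amp (S J) / 1024 <= RInt (demod (S J)) (1/4) (1/2).
Proof.
  destruct (RInt_demod_head_le J) as [Hex_head Hhead].
  set (head t := sum_f_R0 (fun k => demod_term (S J) k t) J).
  set (tail t := Series (fun k => demod_term (S J) (S (S J) + k) t)).
  assert (Hdec : forall t, demod (S J) t = head t + demod_term (S J) (S J) t + tail t).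
  { intros t. unfold demod. rewrite (Series_incr_n _ (S (S J))); [reflexivity | lia |].
    apply ex_series_chirp. intros z. apply Rabs_cos_le_1. }
  assert (Hex_diag := proj1 (RInt_demod_term (S J) (S J))).
  assert (Hex_demod : ex_RInt (demod (S J)) (1/4) (1/2))
    by (apply (@ex_RInt_continuous R_CompleteNormedModule); intros; apply continuous_demod).
  assert (Hex_tail : ex_RInt tail (1/4) (1/2)).
  { apply (@ex_RInt_ext R_NormedModule
             (fun t => minus (minus (demod (S J) t) (head t)) (demod_term (S J) (S J) t))).
    - intros t _. rewrite Hdec. unfold minus, plus, opp; simpl. ring.
    - apply (@ex_RInt_minus R_NormedModule); [apply (@ex_RInt_minus R_NormedModule)|]; assumption. }
  assert (Hsplit : RInt (demod (S J)) (1/4) (1/2)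
                   = RInt head (1/4) (1/2) + RInt (demod_term (S J) (S J)) (1/4) (1/2)
                     + RInt tail (1/4) (1/2)).
  { rewrite (@RInt_ext R_CompleteNormedModule _
               (fun t => plus (plus (head t) (demod_term (S J) (S J) t)) (tail t)))
      by (intros t _; apply Hdec).
    rewrite !(@RInt_plus R_CompleteNormedModule); try assumption.
    - reflexivity.
    - apply (@ex_RInt_plus R_NormedModule); assumption. }
  assert (Htail : Rabs (RInt tail (1/4) (1/2)) <= (1/2 - 1/4) * (amp (S J) / 192))
    by (apply abs_RInt_le_const; [lra | exact Hex_tail | intros; apply demod_tail_le]).
  rewrite Hsplit, RInt_demod_term_diag.
  pose proof (apar_le_amp (S J)).
  apply Rabs_le_between in Hhead. apply Rabs_le_between in Htail. unfold head. lra.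
Qed.

Definition chirp (t : R) : C := (chirp_series cos t, chirp_series sin t).

Lemma chirp_out t : t <= 1/4 \/ 1/2 <= t -> chirp t = RtoC 0.
Proof. intros Ht. unfold chirp. now rewrite !chirp_series_out. Qed.

Lemma Holder_half_supp_chirp : Holder_half_supp chirp.
Proof.
  split; [intros t Ht; apply chirp_out; lra|].
  exists 2. intros t1 t2.
  eapply Rle_trans; [apply Cmod_2Rmax|]. cbn [fst snd chirp Cminus Cplus Copp].
  assert (Hmax : Rmax (Rabs (chirp_series cos t1 + - chirp_series cos t2))
                      (Rabs (chirp_series sin t1 + - chirp_series sin t2)) <= sqrt (Rabs (t1 - t2))).
  { apply Rmax_lub; apply chirp_series_holder;
      auto using Rabs_cos_le_1, Rabs_sin_le_1, cos_lipschitz, sin_lipschitz. }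
  assert (sqrt 2 <= 2).
  { rewrite <- (sqrt_square 2) at 2 by lra. apply sqrt_le_1; lra. }
  pose proof (sqrt_pos 2). pose proof (sqrt_pos (Rabs (t1 - t2))).
  pose proof (Rabs_pos (chirp_series cos t1 + - chirp_series cos t2)).
  pose proof (Rmax_l (Rabs (chirp_series cos t1 + - chirp_series cos t2))
                     (Rabs (chirp_series sin t1 + - chirp_series sin t2))).
  nra.
Qed.

Lemma Re_chirp_cexpi J t : fst (Cmult (chirp t) (cexpi (- chirp_phase J t))) = demod J t.
Proof.
  rewrite demod_eq. unfold chirp, cexpi, Cmult. cbn [fst snd].
  rewrite cos_neg, sin_neg. ring.
Qed.

Lemma continuous_Im_chirp_cexpi J t :
  continuous (fun t => snd (Cmult (chirp t) (cexpi (- chirp_phase J t)))) t.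
Proof.
  apply (continuous_ext (fun t => plus (mult (chirp_series cos t) (sin (- chirp_phase J t)))
                                        (mult (chirp_series sin t) (cos (- chirp_phase J t))))).
  { intros u. unfold chirp, cexpi, Cmult. cbn [fst snd]. unfold plus, mult; simpl. ring. }
  assert (Hphase : continuous (fun t => - chirp_phase J t) t)
    by apply (continuous_opp (chirp_phase J)), continuous_chirp_phase.
  apply (@continuous_plus R_UniformSpace R_AbsRing R_NormedModule);
  apply (@continuous_mult R_UniformSpace R_AbsRing).
  - apply continuous_chirp_series; [apply Rabs_cos_le_1 | apply cos_lipschitz].
  - now apply continuous_sin_comp.
  - apply continuous_chirp_series; [apply Rabs_sin_le_1 | apply sin_lipschitz].
  - now apply continuous_cos_comp.
Qed.

Lemma RInt_gen_chirp_cexpi J :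
  @RInt_gen C_R_CompleteNormedModule (fun t => Cmult (chirp t) (cexpi (- chirp_phase J t)))
    (Rbar_locally m_infty) (Rbar_locally p_infty)
  = (RInt (demod J) (1/4) (1/2),
     RInt (fun t => snd (Cmult (chirp t) (cexpi (- chirp_phase J t)))) (1/4) (1/2)).
Proof.
  apply is_RInt_gen_unique, (is_RInt_gen_of_support _ (1/4) (1/2)); [lra| |].
  - intros t Ht. rewrite chirp_out by exact Ht. apply Cmult_0_l.
  - rewrite <- (@RInt_ext R_CompleteNormedModule
                   (fun t => fst (Cmult (chirp t) (cexpi (- chirp_phase J t)))))
      by (intros; apply Re_chirp_cexpi).
    apply (@is_RInt_fct_extend_pair R_NormedModule R_NormedModule);
      apply (@RInt_correct R_CompleteNormedModule), (@ex_RInt_continuous R_CompleteNormedModule);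
      intros t _.
    + apply (continuous_ext (demod J)); [|apply continuous_demod].
      intros; symmetry; apply Re_chirp_cexpi.
    + apply continuous_Im_chirp_cexpi.
Qed.

Lemma Cmod_Lop_chirp_ge (b : R -> R) u J : b (apar (S J)) * u = X (S J) ->
  / (1024 * sqrt (2 * PI) * sqrt 2) <= Cmod (Lop b (apar (S J)) chirp u).
Proof.
  intros Hb. unfold Lop. rewrite Hb.
  change (fun t => Cmult (chirp t) (cexpi (- ((X (S J) - t) ^ 2 / (4 * apar (S J))))))
    with (fun t => Cmult (chirp t) (cexpi (- chirp_phase (S J) t))).
  rewrite RInt_gen_chirp_cexpi, !Cmod_mult, !Cmod_R, Cmod_cexpi, Rmult_1_l.
  pose proof (RInt_demod_ge J) as Hlow.
  pose proof (re_le_Cmod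
    (RInt (demod (S J)) (1/4) (1/2),
     RInt (fun t => snd (Cmult (chirp t) (cexpi (- chirp_phase (S J) t)))) (1/4) (1/2))) as Hre.
  unfold Re in Hre. cbn [fst] in Hre.
  assert (Hsq : sqrt (2 * apar (S J)) = sqrt 2 * amp (S J))
    by (rewrite sqrt_mult, sqrt_apar; [reflexivity | lra | apply Rlt_le, apar_pos]).
  rewrite Hsq.
  pose proof (amp_pos (S J)). pose proof (sqrt_lt_R0 2 ltac:(lra)).
  assert (0 < sqrt (2 * PI)) by (apply sqrt_lt_R0; pose proof PI_RGT_0; lra).
  rewrite !Rabs_pos_eq by (apply Rlt_le, Rinv_0_lt_compat; nra).
  rewrite Rabs_pos_eq in Hre by lra.
  apply Rle_trans with (/ sqrt (2 * PI) * (/ (sqrt 2 * amp (S J)) * (amp (S J) / 1024))).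
  - right. field. lra.
  - apply Rmult_le_compat_l; [apply Rlt_le, Rinv_0_lt_compat; lra|].
    apply Rmult_le_compat_l; [apply Rlt_le, Rinv_0_lt_compat; nra | lra].
Qed.

End Chirp.

Lemma Cminus_0_r (z : C) : Cminus z (RtoC 0) = z.
Proof. destruct z as [x y]. unfold Cminus, Cplus, Copp, RtoC. simpl. f_equal; ring. Qed.

Lemma not_filterlim_at_right_of_far (F : R -> C) (l : C) c : 0 < c ->
  (forall d, 0 < d -> exists a, 0 < a < d /\ c <= Cmod (Cminus (F a) l)) ->
  ~ filterlim F (at_right 0) (locally l).
Proof.
  intros Hc Hfar Hlim.
  destruct (proj1 (@filterlim_locally _ C_UniformSpace _ _ _ _) Hlim (mkposreal (c / 2) ltac:(lra)))
    as [d Hd].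
  destruct (Hfar d (cond_pos d)) as [a [[Ha0 Had] Hca]].
  destruct (Hd a) as [H1 H2];
    [change (Rabs (a - 0) < d); rewrite Rminus_0_r, Rabs_pos_eq; lra | exact Ha0|].
  change (Rabs (fst (F a) - fst l) < c / 2) in H1.
  change (Rabs (snd (F a) - snd l) < c / 2) in H2.
  pose proof (Cmod_2Rmax (Cminus (F a) l)) as Hmod. cbn [fst snd Cminus Cplus Copp] in Hmod.
  assert (sqrt 2 < 2) by (rewrite <- (sqrt_square 2) at 2 by lra; apply sqrt_lt_1; lra).
  assert (Rmax (Rabs (fst (F a) + - fst l)) (Rabs (snd (F a) + - snd l)) < c / 2)
    by (apply Rmax_lub_lt; assumption).
  pose proof (Rle_trans _ _ _ (Rabs_pos (fst (F a) + - fst l)) (Rmax_l _ (Rabs (snd (F a) + - snd l)))).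
  nra.
Qed.

Theorem proposition1 (M : R) (b : R -> R) :
  0 < M ->
  (forall a, 0 <= a <= 1 -> Rabs (b a) <= M) ->
  b 0 = 1 ->
  exists (f : R -> C) (u0 : R),
    Holder_half_supp f /\ 0 < u0 < 1 / (80 * M) /\
    ~ filterlim (fun a => Lop b a f u0) (at_right 0) (locally (L0 b f u0)).
Proof.
  intros HM Hb Hb0.
  assert (HM1 : 1 <= M) by (pose proof (Hb 0 ltac:(lra)) as H; rewrite Hb0, Rabs_R1 in H; exact H).
  set (u0 := 1 / (160 * M)).
  assert (Hu0 : 0 < u0 /\ M * u0 = 1/160) by (unfold u0; split; [apply Rdiv_lt_0_compat | field]; lra).
  set (X k := b (apar k) * u0).
  assert (HX : forall k, Rabs (X k) <= 1/160).
  { intros k. unfold X. rewrite Rabs_mult, (Rabs_pos_eq u0) by lra.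
    assert (Hk : 0 <= apar k <= 1)
      by (pose proof (apar_pos k); pose proof (apar_le_amp k); pose proof (amp_le k); lra).
    pose proof (Hb _ Hk). pose proof (Rabs_pos (b (apar k))). nra. }
  exists (chirp X), u0. split; [exact (Holder_half_supp_chirp X HX) | split].
  - split; [lra|]. unfold u0. apply Rmult_lt_reg_r with (160 * M); [lra|]. field_simplify; lra.
  - replace (L0 b (chirp X) u0) with (RtoC 0)
      by (unfold L0; rewrite Hb0, Rmult_1_l; symmetry; apply chirp_out; left; nra).
    apply not_filterlim_at_right_of_far with (/ (1024 * sqrt (2 * PI) * sqrt 2)).
    { assert (0 < sqrt (2 * PI)) by (apply sqrt_lt_R0; pose proof PI_RGT_0; lra).
      pose proof (sqrt_lt_R0 2 ltac:(lra)). apply Rinv_0_lt_compat. nra. }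
    intros d Hd. destruct (apar_small d Hd) as [J HJ].
    exists (apar (S J)). pose proof (apar_lt_le J (S J) (Nat.lt_succ_diag_r J)).
    pose proof (apar_pos (S J)). split; [lra|].
    rewrite Cminus_0_r. now apply Cmod_Lop_chirp_ge.
Qed.
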